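(* Let $d\ge 3$ and let $A=\lambda B+(1-\lambda)B'$ with $0<\lambda<1$, where $B,B'$ are $d$-dimensional $(0,1)$-matrices of order $4$ each equivalent to $\mathcal{M}_4^d$. Suppose the tessellation index of $A$ is $d-1$, and suppose that no new entry is added to the support of any filled subcube, i.e. $\operatorname{supp}(B')\cap C\subseteq\operatorname{supp}(B)$ for every filled subcube $C$ of $B$ and $\operatorname{supp}(B)\cap C'\subseteq\operatorname{supp}(B')$ for every filled subcube $C'$ of $B'$. Then $A$ is equivalent to a matrix from $\mathcal{L}_4^d$.
   Context: $\mathcal{M}_n^d$ has entry $1$ at $\alpha$ iff $\alpha_1+\dots+\alpha_d\equiv0\pmod n$. $\mathcal{L}_n^d$ is the family of matrices $\mu\mathcal{M}_n^d+(1-\mu)M$, $0<\mu<1$, where $M$ is the $(0,1)$-matrix with support $\{\alpha:\alpha_1+\dots+\alpha_{d-1}+\pi(\alpha_d)\equiv0\pmod n\}$, $\pi$ the transposition of $0$ and $1$. Equivalence: permuting coordinate positions and/or applying a permutation of $\{0,\dots,n-1\}$ to a single coordinate, repeatedly. The support $\operatorname{supp}$ is the set of indices of nonzero entries. Define $p_1,p_2,p_3:\{0,1,2,3\}\to\{0,1\}$ by $p_1(0)=p_1(1)=0,\ p_1(2)=p_1(3)=1$; $p_2(0)=p_2(2)=0,\ p_2(1)=p_2(3)=1$; $p_3(0)=p_3(3)=0,\ p_3(1)=p_3(2)=1$; and $\mu_1(0)=\mu_1(2)=0,\ \mu_1(1)=\mu_1(3)=1$; $\mu_2(0)=\mu_2(1)=0,\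 \mu_2(2)=\mu_2(3)=1$; $\mu_3(0)=\mu_3(2)=0,\ \mu_3(1)=\mu_3(3)=1$. $Q_s^d=\{y\in\{0,1\}^d:w(y)\equiv s\pmod 2\}$ ($w$ = Hamming weight). For $\mathcal{E}\in\{1,2,3\}^d$, $s\in\{0,1\}$, $\lambda:Q_s^d\to\{0,1\}$, the block permutation with parameters $(\mathcal{E},\lambda,s)$ is the $(0,1)$-matrix with entry $1$ at $\alpha$ iff $\bigoplus_i p_{\varepsilon_i}(\alpha_i)=s$ and $\bigoplus_i\mu_{\varepsilon_i}(\alpha_i)\oplus\lambda(p_{\varepsilon_1}(\alpha_1),\dots,p_{\varepsilon_d}(\alpha_d))=0$. Every matrix equivalent to $\mathcal{M}_4^d$ ($d\ge3$) is a block permutation for a unique parameter triple; relative to these, its subcubes are $C_y=\{\alpha:p_{\varepsilon_i}(\alpha_i)=y_i\ \forall i\}$ and $C_y$ is filled if $w(y)\equiv s\pmod 2$. The intersection of a subcube of $B$ with a subcube of $B'$ is either empty or a product set of size $2^j$; the tessellation index of $\lambda B+(1-\lambda)B'$ is the maximum of such $j$ over pairs (filled subcube of $B$, filled subcube of $B'$) with nonempty intersection, and $-\infty$ if all are empty. *)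

From Stdlib Require Import Relation_Operators.
From mathcomp Require Import all_boot all_order all_algebra.
From mathcomp Require Import fingroup perm.
Set Implicit Arguments. Unset Strict Implicit. Unset Printing Implicit Defensive.
Import Order.TTheory GRing.Theory Num.Theory.
Local Open Scope ring_scope.

(* Indices of a d-dimensional matrix of order n: alpha = (alpha_1,..,alpha_d),
   alpha_i in {0,..,n-1}; coordinate i is encoded by (i : 'I_d). *)
Definition idx (d n : nat) := {ffun 'I_d -> 'I_n}.

Definition mat (T : Type) (d n : nat) := idx d n -> T.

Section Defs.
Variable R : realFieldType.
Local Unset Implicit Arguments.

Definition supp d n (A : mat R d n) : {set idx d n} := [set a | A a != 0].

Definition Mmat (d n : nat) : mat R d n :=
  fun a => if ((\sum_(i < d) (a i : nat)) %% n == 0)%N then 1 else 0.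

Definition pi01 (x : nat) : nat :=
  if x == 0%N then 1%N else if x == 1%N then 0%N else x.

(* the (0,1)-matrix with support alpha_1+...+alpha_{d-1}+pi(alpha_d) = 0 mod n
   (the last coordinate alpha_d is the coordinate with index d-1) *)
Definition Mpi (d n : nat) : mat R d n :=
  fun a => if ((\sum_(i < d) (if (i : nat) == d.-1 then pi01 (a i) else a i)) %% n
               == 0)%N then 1 else 0.

Definition Lmat (d n : nat) (mu : R) : mat R d n :=
  fun a => mu * Mmat d n a + (1 - mu) * Mpi d n a.

Definition in_L (d n : nat) (A : mat R d n) : Prop :=
  exists mu : R, 0 < mu < 1 /\ A = Lmat d n mu.

Local Set Implicit Arguments.
Inductive equiv_step (d n : nat) : mat R d n -> mat R d n -> Prop :=
| step_pos (A : mat R d n) (t : {perm 'I_d}) :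
    equiv_step A (fun a => A [ffun i => a (t i)])
| step_val (A : mat R d n) (k : 'I_d) (s : {perm 'I_n}) :
    equiv_step A (fun a => A [ffun i => if i == k then s (a i) else a i]).

Definition mat_equiv (d n : nat) : mat R d n -> mat R d n -> Prop :=
  clos_refl_trans (mat R d n) (@equiv_step d n).

End Defs.
Arguments supp {R d n}.
Arguments in_L {R d n}.
Arguments mat_equiv {R d n}.

(* The functions p_1,p_2,p_3 and mu_1,mu_2,mu_3 on {0,1,2,3};
   epsilon in {1,2,3} is encoded by e : 'I_3 with epsilon = e + 1. *)
Definition pfun (e : 'I_3) (x : 'I_4) : bool :=
  match (e : nat), (x : nat) with
  | 0, x => (x == 2) || (x == 3)
  | 1, x => (x == 1) || (x == 3)
  | _, x => (x == 1) || (x == 2)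
  end%N.

Definition mufun (e : 'I_3) (x : 'I_4) : bool :=
  match (e : nat), (x : nat) with
  | 0, x => (x == 1) || (x == 3)
  | 1, x => (x == 2) || (x == 3)
  | _, x => (x == 1) || (x == 3)
  end%N.

Definition xorsum d (f : 'I_d -> bool) : bool := \big[addb/false]_(i < d) f i.

Definition pvec d (E : {ffun 'I_d -> 'I_3}) (a : idx d 4) : {ffun 'I_d -> bool} :=
  [ffun i => pfun (E i) (a i)].

(* block permutation with parameters (E, lam, s); lam is given on all of
   {0,1}^d but only its values on Q_s^d matter. *)
Definition blockperm (R : realFieldType) d (E : {ffun 'I_d -> 'I_3})
    (lam : {ffun 'I_d -> bool} -> bool) (s : bool) : mat R d 4 :=
  fun a => if (xorsum (fun i => pfun (E i) (a i)) == s) &&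
              ((xorsum (fun i => mufun (E i) (a i))) (+) lam (pvec E a) == false)
           then 1 else 0.

Definition subcube d (E : {ffun 'I_d -> 'I_3}) (y : {ffun 'I_d -> bool})
  : {set idx d 4} := [set a | pvec E a == y].

Definition hweight d (y : {ffun 'I_d -> bool}) : nat := #|[set i | y i]|.
Definition filled d (s : bool) (y : {ffun 'I_d -> bool}) : bool :=
  odd (hweight y) == s.

(* tessellation index of lambda B + (1-lambda) B' where B, B' are block
   permutations with parameters (E,_,s), (E',_,s'): None encodes -infinity,
   Some j is the maximal j such that some filled subcube of B meets some
   filled subcube of B' in 2^j entries. *)
Definition max_inter d (E : {ffun 'I_d -> 'I_3}) (s : bool)
    (E' : {ffun 'I_d -> 'I_3}) (s' : bool) : nat :=
  \max_(y | filled s y) \max_(y' | filled s' y')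
     #|subcube E y :&: subcube E' y'|.

Definition tess_index d (E : {ffun 'I_d -> 'I_3}) (s : bool)
    (E' : {ffun 'I_d -> 'I_3}) (s' : bool) : option nat :=
  let m := max_inter E s E' s' in
  if m == 0%N then None else Some (trunc_log 2 m).

From mathcomp Require Import all_boot all_order all_algebra fingroup perm zify ring.
From Stdlib Require Import Relation_Operators FunctionalExtensionality.
Set Implicit Arguments. Unset Strict Implicit. Unset Printing Implicit Defensive.
Import GRing.Theory.
Local Open Scope ring_scope.

(* Since the tessellation index is d - 1, the parameter vectors E and E' differ
   in exactly one coordinate k.  On every line in direction k each of B, B' has
   a single nonzero entry, and excluding new entries inside filled subcubes
   forces B' to be B composed with one fixed transposition (u w) of the values
   of coordinate k, the same for all lines.  Pulling back along the equivalence
   B ~ M_4^d, the transposition becomes (v v+1) for some v: the two values u, w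
   lie in different p-blocks of B, and these blocks correspond to the classes
   {y, y+2} of M_4^d.  Finally a permutation of positions and two opposite
   shifts of values turn l M + (1 - l) M o (v v+1) into an element of L_4^d. *)

(* [enum] and [#|_|] are locked, so finite facts are decided by [vm_compute]
   over these explicit enumerations instead. *)
Definition ords4 : seq 'I_4 := [:: 0; 1; 2; 3].

Lemma mem_ords4 (x : 'I_4) : x \in ords4.
Proof. by case: x => [[|[|[|[|]]]] ?]. Qed.

Lemma mem_bools (b : bool) : b \in [:: false; true].
Proof. by case: b. Qed.

Lemma all_enumP (T : eqType) (s : seq T) (P : pred T) :
  (forall x, x \in s) -> reflect (forall x, P x) (all P s).
Proof. by move=> sT; apply: (iffP allP) => H x => [|_]; apply: H. Qed.

Lemma has_enumP (T : eqType) (s : seq T) (P : pred T) :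
  (forall x, x \in s) -> reflect (exists x, P x) (has P s).
Proof. by move=> sT; apply: (iffP hasP) => [[x _ Px] | [x Px]]; exists x. Qed.

(* The pattern of the block permutation along a line in direction k, with
   [e = E k]: the parity condition fixes [p_e x = r], the mu-condition [mu_e x = m]. *)
Definition line (e : 'I_3) (r m : bool) (x : 'I_4) : bool :=
  (pfun e x == r) && (mufun e x == m).

Lemma line_transfer (e e' : 'I_3) (c : bool) : e != e' ->
  exists u w, pfun e u != pfun e w /\
  forall r m m',
    (forall x, pfun e x = r -> line e' (c (+) r) m' x -> line e r m x) ->
    (forall x, pfun e' x = c (+) r -> line e r m x -> line e' (c (+) r) m' x) ->
    line e' (c (+) r) m' =1 line e r m \o tperm u w.
Proof.
move=> ee'.
pose ok u w := (pfun e u != pfun e w) && all (fun r => all (fun m => all (fun m' =>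
  all (fun x => (pfun e x == r) ==> line e' (c (+) r) m' x ==> line e r m x) ords4 ==>
  all (fun x => (pfun e' x == c (+) r) ==> line e r m x ==> line e' (c (+) r) m' x) ords4 ==>
  all (fun x => line e' (c (+) r) m' x ==
                line e r m ([fun z => z with u |-> w, w |-> u] x)) ords4)
  [:: false; true]) [:: false; true]) [:: false; true].
have : has (fun u => has (ok u) ords4) ords4.
  rewrite {}/ok; move: ee'.
  by case: e => [[|[|[|]]] ?]; case: e' => [[|[|[|]]] ?]; case: c; vm_compute.
case/(has_enumP _ mem_ords4) => u /(has_enumP _ mem_ords4) [w].
case/andP=> uw /(all_enumP _ mem_bools) okw.
exists u, w; split=> // r m m' h h' x.
have h1 : all (fun y => (pfun e y == r) ==> line e' (c (+) r) m' y ==> line e r m y) ords4.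
  by apply/(all_enumP _ mem_ords4) => y; apply/implyP => /eqP/h hy; exact/implyP.
have h2 : all (fun y => (pfun e' y == c (+) r) ==> line e r m y ==> line e' (c (+) r) m' y) ords4.
  by apply/(all_enumP _ mem_ords4) => y; apply/implyP => /eqP/h' hy; exact/implyP.
move: (okw r) => /(all_enumP _ mem_bools)/(_ m)/(all_enumP _ mem_bools)/(_ m').
by rewrite h1 h2 => /(all_enumP _ mem_ords4)/(_ x)/eqP; rewrite /= permE.
Qed.

Lemma ord4_adjacent (x y : 'I_4) : x != y -> x != y + 2 -> (x == y + 1) || (y == x + 1).
Proof. by case: x => [[|[|[|[|]]]] ?]; case: y => [[|[|[|[|]]]] ?]. Qed.

Lemma ord4_double (x : 'I_4) : x != 0 -> (x == 2) || (x + x == 2).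
Proof. by case: x => [[|[|[|[|]]]] ?]. Qed.

Lemma enum_ord4 : enum 'I_4 = ords4.
Proof. by apply: (inj_map val_inj); rewrite val_enum_ord. Qed.

Lemma card_ord4 (P : pred 'I_4) : #|P| = count P ords4.
Proof. by rewrite cardE /enum_mem -enumT enum_ord4 size_filter. Qed.

Lemma card_pfun_pair (e e' : 'I_3) (b b' : bool) :
  #|[pred x : 'I_4 | (pfun e x == b) && (pfun e' x == b')]| =
  if e == e' then (if b == b' then 2 else 0)%N else 1%N.
Proof.
by rewrite card_ord4; case: e => [[|[|[|]]] ?]; case: e' => [[|[|[|]]] ?]; case: b; case: b'.
Qed.

Lemma ord4_period2 (f g : 'I_4 -> bool) :
  (forall z x x', f x = f x' -> g (z - x) = g (z - x')) -> forall y, g (y + 2) = g y.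
Proof.
move=> fg y.
have [x [x' [xx' fxx']]] : exists x x' : 'I_4, x != x' /\ f x = f x'.
  case: (f 0 =P f 1) => [|f01]; first by exists 0, 1.
  case: (f 0 =P f 2) => [|f02]; first by exists 0, 2.
  by exists 1, 2; split=> //; move: f01 f02; case: (f 0); case: (f 1); case: (f 2).
have shift z : g (z + (x - x')) = g z by rewrite addrA (fg (z + x) x' x) ?addrK.
have /ord4_double/orP[/eqP <-|/eqP <-] : x - x' != 0 by rewrite subr_eq0.
  by rewrite shift.
by rewrite addrA !shift.
Qed.

Lemma tperm_conj_period2 (sg : {perm 'I_4}) (p : 'I_4 -> bool) (u w : 'I_4) :
  p u != p w -> (forall y, p (sg (y + 2)) = p (sg y)) ->
  exists v, forall x, (sg^-1)%g (tperm u w (sg x)) = tperm v (v + 1) x.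
Proof.
move=> puw p2.
set x0 := (sg^-1)%g u; set x1 := (sg^-1)%g w.
have conj x : (sg^-1)%g (tperm u w (sg x)) = tperm x0 x1 x.
  by rewrite -[u](permKV sg) -[w](permKV sg) -inj_tperm ?permK //; apply: perm_inj.
suff [v vE] : exists v, tperm x0 x1 = tperm v (v + 1) by exists v => x; rewrite conj vE.
have /ord4_adjacent : x1 != x0.
  by apply: contraNneq puw => /(congr1 sg); rewrite !permKV => ->.
case/(_ _)/orP => [|/eqP-> | /eqP->].
- by apply: contraNneq puw => x1E; rewrite -(permKV sg u) -(permKV sg w) -/x0 -/x1 x1E p2.
- by exists x0.
- by exists x1; rewrite tpermC.
Qed.

Lemma tperm_addr (v x : 'I_4) : tperm v (v + 1) (x + v) = tperm 0 1 x + v.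
Proof. by rewrite (inj_tperm _ _ _ (@addIr _ v)) add0r addrC. Qed.

Definition upd d n (a : idx d n) (k : 'I_d) (x : 'I_n) : idx d n :=
  [ffun i => if i == k then x else a i].

Definition remap d n (t : {perm 'I_d}) (sg : 'I_d -> {perm 'I_n}) (a : idx d n) : idx d n :=
  [ffun i => sg i (a (t i))].

Lemma upd_eq d n (a : idx d n) k x : upd a k x k = x.
Proof. by rewrite ffunE eqxx. Qed.

Lemma upd_upd d n (a : idx d n) k x y : upd (upd a k x) k y = upd a k y.
Proof. by apply/ffunP => i; rewrite !ffunE; case: eqP. Qed.

Lemma upd_id d n (a : idx d n) k : upd a k (a k) = a.
Proof. by apply/ffunP => i; rewrite ffunE; case: eqP => [->|]. Qed.

Lemma remap_upd d n t sg (a : idx d n) k x :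
  upd (remap t sg a) k (sg k x) = remap t sg (upd a (t k) x).
Proof. by apply/ffunP => i; rewrite !ffunE (inj_eq perm_inj); case: eqP => [->|]. Qed.

Lemma remap_comp d n t1 s1 t2 s2 (a : idx d n) :
  remap t1 s1 (remap t2 s2 a) = remap (t1 * t2)%g (fun i => s2 (t1 i) * s1 i)%g a.
Proof. by apply/ffunP => i; rewrite !ffunE !permM. Qed.

Section Equivalence.
Variables (R : realFieldType) (d n : nat).
Implicit Types (X Y Z : mat R d n) (t : {perm 'I_d}) (sg : 'I_d -> {perm 'I_n}).

Lemma mat_equiv_eqr X Y Y' : mat_equiv X Y -> Y =1 Y' -> mat_equiv X Y'.
Proof. by move=> XY /functional_extensionality <-. Qed.

Lemma mat_equiv_remap Z t sg : mat_equiv Z (Z \o remap t sg).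
Proof.
pose Zs (s : seq 'I_d) b := Z [ffun i => if i \in s then sg i (b i) else b i].
have Z_Zs s : uniq s -> mat_equiv Z (Zs s).
  elim: s => [_ | k s IH /andP[ks us]].
    apply: mat_equiv_eqr (rt_refl _ _ _) _ => b.
    by rewrite /Zs; congr Z; apply/ffunP => i; rewrite ffunE.
  apply: rt_trans (IH us) (mat_equiv_eqr (rt_step _ _ _ _ (step_val (Zs s) k (sg k))) _) => b.
  rewrite /Zs; congr Z; apply/ffunP => i; rewrite !ffunE inE.
  by case: eqP => [->|]; rewrite ?(negbTE ks).
apply: rt_trans (Z_Zs _ (enum_uniq 'I_d)) (mat_equiv_eqr (rt_step _ _ _ _ (step_pos _ t)) _) => a.
by rewrite /Zs /=; congr Z; apply/ffunP => i; rewrite !ffunE mem_enum.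
Qed.

Lemma remap_of_mat_equiv X Y : mat_equiv X Y -> exists t sg, Y =1 X \o remap t sg.
Proof.
elim=> [{}X {}Y [A t | A k s] | {}X | {}X {}Y Z _ [t1 [s1 XY]] _ [t2 [s2 YZ]]].
- by exists t, (fun=> 1%g) => a; congr A; apply/ffunP => i; rewrite !ffunE perm1.
- exists 1%g, (fun i => if i == k then s else 1%g) => a; congr A.
  by apply/ffunP => i; rewrite !ffunE perm1; case: eqP; rewrite ?perm1.
- by exists 1%g, (fun=> 1%g) => a; congr X; apply/ffunP => i; rewrite !ffunE !perm1.
- by exists (t1 * t2)%g, (fun i => s2 (t1 i) * s1 i)%g => a; rewrite YZ /= XY /= remap_comp.
Qed.

End Equivalence.

Section Diagonal.
Variables (R : realFieldType) (d : nat).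
Implicit Types (a b : idx d 4).

Lemma sum_upd a k x : \sum_i upd a k x i = \sum_i a i + (x - a k).
Proof.
rewrite (bigD1 k) //= [\sum_i a i](bigD1 k) //= ffunE eqxx.
rewrite (eq_bigr (fun i => a i)) => [|i /negbTE ik]; last by rewrite ffunE ik.
by ring.
Qed.

Lemma Mmat_sum a : Mmat R d 4 a = if \sum_i a i == 0 then 1 else 0.
Proof.
have sumE : ((\sum_i (a i : nat)) %% 4)%N = val (\sum_i a i).
  by elim/big_rec2: _ => // i m x _ mE; rewrite /= -mE modnDmr.
by rewrite /Mmat sumE.
Qed.

Lemma eq_Mmat a b : \sum_i a i = \sum_i b i -> Mmat R d 4 a = Mmat R d 4 b.
Proof. by rewrite !Mmat_sum => ->. Qed.

Lemma Mmat_perm (p : {perm 'I_d}) a : Mmat R d 4 [ffun i => a (p i)] = Mmat R d 4 a.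
Proof.
apply: eq_Mmat; rewrite [RHS](reindex_inj (@perm_inj _ p)) /=.
by apply: eq_bigr => i _; rewrite ffunE.
Qed.

Lemma Mpi_upd a (dl : 'I_d) : val dl = d.-1 ->
  Mpi R d 4 a = Mmat R d 4 (upd a dl (tperm 0 1 (a dl))).
Proof.
move=> dlE; rewrite /Mpi /Mmat; congr (if _ then _ else _); congr (_ %% _ == _)%N.
apply: eq_bigr => i _; rewrite ffunE -dlE (inj_eq val_inj).
by case: eqP => [->|//]; rewrite permE /=; case: (a dl) => [[|[|[|[|]]]] ?].
Qed.

Lemma upd_perm (p : {perm 'I_d}) a k x :
  upd [ffun i => a (p i)] k x = [ffun i => upd a (p k) x (p i)].
Proof. by apply/ffunP => i; rewrite !ffunE (inj_eq perm_inj). Qed.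

Lemma mix_adjacent_tperm_equiv_Lmat (l : R) (k : 'I_d) (v : 'I_4) : (1 < d)%N ->
  mat_equiv (fun a => l * Mmat R d 4 a + (1 - l) * Mmat R d 4 (upd a k (tperm v (v + 1) (a k))))
            (Lmat R d 4 l).
Proof.
(* Move coordinate k to the last position, then add v to the last coordinate
   and subtract it from the first: M is unchanged and (v v+1) becomes (0 1). *)
move=> d1; set X := fun a => _.
have dl_lt : (d.-1 < d)%N by lia.
pose dl := Ordinal dl_lt; pose o := Ordinal (ltnW d1 : (0 < d)%N).
have odl : o != dl by rewrite -val_eqE /=; lia.
pose tp := tperm k dl; pose sh (c : 'I_4) := perm (@addIr _ c).
have shE c (b : idx d 4) j : [ffun i => if i == j then sh c (b i) else b i] = upd b j (b j + c).
  by apply/ffunP => i; rewrite !ffunE permE; case: eqP => [->|].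
have X1E b : X [ffun i => b (tp i)] =
    l * Mmat R d 4 b + (1 - l) * Mmat R d 4 (upd b dl (tperm v (v + 1) (b dl))).
  by rewrite /X upd_perm !ffunE !Mmat_perm tpermL.
apply: rt_trans (rt_step _ _ _ _ (step_pos X tp)) _.
apply: rt_trans (rt_step _ _ _ _ (step_val _ dl (sh v))) _.
apply: mat_equiv_eqr (rt_step _ _ _ _ (step_val _ o (sh (- v)))) _ => a.
have odlE x : upd a o x dl = a dl by rewrite ffunE eq_sym (negbTE odl).
rewrite !shE X1E /Lmat odlE upd_eq upd_upd tperm_addr (@Mpi_upd _ dl) //.
by congr (_ * _ + _ * _); apply: eq_Mmat; rewrite !sum_upd odlE; ring.
Qed.

End Diagonal.

Lemma xorsumD1 d (f : 'I_d -> bool) k : xorsum f = f k (+) xorsum (fun i => (i != k) && f i).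
Proof. by rewrite /xorsum (bigD1 k) //= big_mkcond. Qed.

Lemma xorsum_odd d (f : 'I_d -> bool) : xorsum f = odd #|[set i | f i]|.
Proof.
rewrite -sum1_card (big_morph odd oddD (erefl (odd 0))) /xorsum [RHS]big_mkcond /=.
by apply: eq_bigr => i _; rewrite inE; case: (f i).
Qed.

Lemma if_neq0 (R : realFieldType) (b : bool) : ((if b then 1 else 0 : R) != 0) = b.
Proof. by case: b; rewrite ?eqxx ?oner_eq0. Qed.

Definition parity_off d (E : {ffun 'I_d -> 'I_3}) (a : idx d 4) (k : 'I_d) : bool :=
  xorsum (fun i => (i != k) && pfun (E i) (a i)).

Section BlockPermutation.
Variables (R : realFieldType) (d : nat).
Variables (E : {ffun 'I_d -> 'I_3}) (lam : {ffun 'I_d -> bool} -> bool) (s : bool).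
Local Notation B := (blockperm R E lam s).
Implicit Types (a b : idx d 4) (k : 'I_d).

Lemma blockperm_neq0 a : (B a != 0) =
  (xorsum (fun i => pfun (E i) (a i)) == s) &&
  (xorsum (fun i => mufun (E i) (a i)) (+) lam (pvec E a) == false).
Proof. exact: if_neq0. Qed.

Lemma xorsum_pfun_upd a k x :
  xorsum (fun i => pfun (E i) (upd a k x i)) = pfun (E k) x (+) parity_off E a k.
Proof.
rewrite (xorsumD1 _ k) upd_eq; congr addb.
by apply: eq_bigr => i _; rewrite ffunE; case: eqP.
Qed.

Lemma blockperm_line a k : exists m, forall x,
  B (upd a k x) = if line (E k) (s (+) parity_off E a k) m x then 1 else 0.
Proof.
set r := s (+) parity_off E a k.
pose y := [ffun i => if i == k then r else pfun (E i) (a i)].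
exists (xorsum (fun i => (i != k) && mufun (E i) (a i)) (+) lam y) => x.
rewrite /blockperm xorsum_pfun_upd (xorsumD1 (fun i => mufun _ _) k) upd_eq.
have -> : xorsum (fun i => (i != k) && mufun (E i) (upd a k x i)) =
          xorsum (fun i => (i != k) && mufun (E i) (a i)).
  by apply: eq_bigr => i _; rewrite ffunE; case: eqP.
rewrite /line /r; case: (pfun (E k) x =P s (+) parity_off E a k) => [px | npx].
  have -> : pvec E (upd a k x) = y by apply/ffunP => i; rewrite !ffunE; case: eqP => [->|].
  by rewrite px -addbA addbb addbF eqxx; case: (mufun _ _); case: (xorsum _); case: (lam y).
by rewrite (_ : _ == s = false) //; apply: contraNF (introN eqP npx) => /eqP <-; rewrite addbK.
Qed.

Lemma blockperm_parity_off a b k : B a != 0 -> B b != 0 ->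
  parity_off E a k = parity_off E b k -> pfun (E k) (a k) = pfun (E k) (b k).
Proof.
rewrite !blockperm_neq0 (xorsumD1 _ k) [xorsum (fun i => pfun _ (b i))](xorsumD1 _ k).
move=> /andP[/eqP sa _] /andP[/eqP sb _] offE.
by apply: (@addIb (parity_off E a k)); rewrite [in RHS]offE /parity_off sa sb.
Qed.

Lemma filled_supp_sub (B' : mat R d 4) :
  (forall y, filled s y -> supp B' :&: subcube E y \subset supp B) ->
  forall a, xorsum (fun i => pfun (E i) (a i)) = s -> B' a != 0 -> B a != 0.
Proof.
move=> sub a pa B'a.
have filled_a : filled s (pvec E a).
  rewrite /filled /hweight -pa xorsum_odd (_ : [set i | _] = [set i | pfun (E i) (a i)]) //.
  by apply/setP => i; rewrite !inE ffunE.
by have := subsetP (sub _ filled_a) a; rewrite !inE B'a eqxx; apply.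
Qed.

End BlockPermutation.

Lemma blockperm_transfer (R : realFieldType) d (E E' : {ffun 'I_d -> 'I_3})
    (lam lam' : {ffun 'I_d -> bool} -> bool) (s s' : bool) (k : 'I_d) :
  E k != E' k -> (forall i, i != k -> E i = E' i) ->
  (forall a : idx d 4, xorsum (fun i => pfun (E i) (a i)) = s ->
     blockperm R E' lam' s' a != 0 -> blockperm R E lam s a != 0) ->
  (forall a : idx d 4, xorsum (fun i => pfun (E' i) (a i)) = s' ->
     blockperm R E lam s a != 0 -> blockperm R E' lam' s' a != 0) ->
  exists u w, pfun (E k) u != pfun (E k) w /\
    forall a : idx d 4,
      blockperm R E' lam' s' a = blockperm R E lam s (upd a k (tperm u w (a k))).
Proof.
move=> Ek EE' sub sub'.
have [u [w [uw transfer]]] := line_transfer (s (+) s') Ek.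
exists u, w; split=> // a.
have offE : parity_off E' a k = parity_off E a k.
  by apply: eq_bigr => i _; case: eqP => // /eqP /EE' ->.
have [m lineB] := blockperm_line R E lam s a k.
have [m' lineB'] := blockperm_line R E' lam' s' a k.
set r := s (+) parity_off E a k in lineB.
have r'E : s' (+) parity_off E' a k = (s (+) s') (+) r.
  by rewrite offE /r; case: (s); case: (s'); case: (parity_off E a k).
rewrite r'E in lineB'.
rewrite -{1}(upd_id a k) lineB' lineB (transfer r m m') // => x px.
- have := sub (upd a k x); rewrite lineB lineB' !if_neq0; apply.
  by rewrite xorsum_pfun_upd px /r addbK.
- have := sub' (upd a k x); rewrite lineB lineB' !if_neq0; apply.
  by rewrite xorsum_pfun_upd px offE /r; case: (s); case: (s'); case: (parity_off E a k).
Qed.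

Lemma card_subcubeI d (E E' : {ffun 'I_d -> 'I_3}) (y y' : {ffun 'I_d -> bool}) :
  #|subcube E y :&: subcube E' y'| =
  if [forall i, (E i == E' i) ==> (y i == y' i)] then (2 ^ #|[set i | E i == E' i]|)%N else 0%N.
Proof.
pose F i := [pred x : 'I_4 | (pfun (E i) x == y i) && (pfun (E' i) x == y' i)].
have -> : #|subcube E y :&: subcube E' y'| = #|family F|.
  apply: eq_card => a; rewrite !inE; apply/andP/familyP => [[/eqP ya /eqP ya'] i | Fa].
    by rewrite inE -ya -ya' !ffunE !eqxx.
  by split; apply/eqP/ffunP => i; rewrite ffunE; case/andP: (Fa i) => /eqP ? /eqP ?.
rewrite card_family foldrE big_map big_enum /=.
case: ifPn => [/forallP agree | /forallPn[i]].
  rewrite (eq_bigr (fun i => if E i == E' i then 2 else 1)%N) => [|i _]; last first.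
    by rewrite /F card_pfun_pair; case: eqP => // EE; rewrite (implyP (agree i)) ?EE.
  by rewrite -big_mkcond prod_nat_const; congr (2 ^ _)%N; apply: eq_card => i; rewrite inE.
rewrite negb_imply => /andP[EE yy].
by rewrite (bigD1 i) //= /F card_pfun_pair EE (negbTE yy).
Qed.

Lemma tess_index_single_disagreement d (E E' : {ffun 'I_d -> 'I_3}) s s' : (0 < d)%N ->
  tess_index E s E' s' = Some d.-1 -> exists k, E k != E' k /\ forall i, i != k -> E i = E' i.
Proof.
move=> d0; rewrite /tess_index /=; set A := [set i | E i == E' i].
have [->|->] : max_inter E s E' s' = 0%N \/ max_inter E s E' s' = (2 ^ #|A|)%N.
- pose P x := x = 0%N \/ x = (2 ^ #|A|)%N.
  have maxP x1 x2 : P x1 -> P x2 -> P (maxn x1 x2).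
    by rewrite /P => -[->|->] [->|->]; rewrite ?max0n ?maxn0 ?maxnn; [left|right..].
  apply: (big_ind P) => [|//|y _]; first by left.
  apply: (big_ind P) => [|//|y' _]; first by left.
  by rewrite /P card_subcubeI; case: ifP; [right|left].
- by rewrite eqxx.
rewrite expn_eq0 /= trunc_expnK // => -[cardA].
have /cards1P[k Ak] : #|~: A| == 1%N by rewrite cardsCs setCK card_ord cardA; apply/eqP; lia.
exists k; split=> [|i ik].
  by have := set11 k; rewrite -Ak !inE.
have : i \notin ~: A by rewrite Ak inE.
by rewrite !inE negbK => /eqP.
Qed.

Lemma exists_ord_notin d (S : {set 'I_d}) : (#|S| < d)%N -> exists i, i \notin S.
Proof.
move=> Sd; have : ~: S != set0 by rewrite -card_gt0 cardsCs setCK card_ord; lia.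
by case/set0Pn => i; rewrite inE; exists i.
Qed.

Lemma blockperm_remap_period2 (R : realFieldType) d (E : {ffun 'I_d -> 'I_3})
    (lam : {ffun 'I_d -> bool} -> bool) (s : bool) t (sg : 'I_d -> {perm 'I_4}) (k : 'I_d) :
  (3 <= d)%N -> Mmat R d 4 =1 blockperm R E lam s \o remap t sg ->
  forall y, pfun (E k) (sg k (y + 2)) = pfun (E k) (sg k y).
Proof.
move=> d3 MB.
have [m mk] : exists m, m \notin [set k] by apply: exists_ord_notin; rewrite cards1; lia.
have [r rkm] : exists r, r \notin [set k; m].
  by apply: exists_ord_notin; rewrite cards2; case: (k != m); lia.
rewrite !inE in mk rkm; case/norP: rkm => rk rm.
have tE i j : (t i == t j) = (i == j) by rewrite (inj_eq perm_inj).
apply: (ord4_period2 (f := fun x => pfun (E m) (sg m x))) => z x x' fxx'.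
(* These points lie in supp M, and their images in supp B differ only in
   coordinates k and m. *)
pose P w : idx d 4 := upd (upd (upd [ffun=> 0] (t r) (- z)) (t m) w) (t k) (z - w).
have PB w : blockperm R E lam s (remap t sg (P w)) != 0.
  rewrite -[_ (remap _ _ _)]/((_ \o _) _) -MB Mmat_sum !sum_upd !ffunE !tE.
  rewrite [m == r]eq_sym (negbTE rm) [k == m]eq_sym (negbTE mk) [k == r]eq_sym (negbTE rk).
  rewrite big1 => [|i _]; last exact: ffunE.
  suff -> : 0 + (- z - 0) + (w - 0) + (z - w - 0) = 0 :> 'I_4 by rewrite eqxx oner_eq0.
  by ring.
have PE w i : remap t sg (P w) i = sg i (P w (t i)) by rewrite ffunE.
have := blockperm_parity_off (PB x) (PB x') (k := k).
rewrite !PE !ffunE !tE eqxx; apply.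
apply: eq_bigr => i _; rewrite !PE !ffunE !tE.
by case: (eqVneq i k) => //= ik; case: (eqVneq i m) => // ->.
Qed.

Theorem mainTheorem13 (R : realFieldType) (d : nat) (hd : (3 <= d)%N)
    (l : R) (hl : 0 < l < 1) (B B' : mat R d 4)
    (hB : mat_equiv B (Mmat R d 4)) (hB' : mat_equiv B' (Mmat R d 4))
    (E : {ffun 'I_d -> 'I_3}) (lam : {ffun 'I_d -> bool} -> bool) (s : bool)
    (E' : {ffun 'I_d -> 'I_3}) (lam' : {ffun 'I_d -> bool} -> bool) (s' : bool)
    (hBE : B = blockperm R E lam s) (hBE' : B' = blockperm R E' lam' s')
    (htess : tess_index E s E' s' = Some d.-1)
    (hnew : forall y, filled s y ->
              supp B' :&: subcube E y \subset supp B)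
    (hnew' : forall y', filled s' y' ->
              supp B :&: subcube E' y' \subset supp B') :
  exists A' : mat R d 4, in_L A' /\
    mat_equiv (fun a => l * B a + (1 - l) * B' a) A'.
Proof.
have [k [Ek EE']] := tess_index_single_disagreement (ltnW (ltnW hd)) htess.
subst B B'.
have [u [w [uw B'E]]] :=
  blockperm_transfer Ek EE' (filled_supp_sub hnew) (filled_supp_sub hnew').
have [t [sg MB]] := remap_of_mat_equiv hB.
have [v vE] := tperm_conj_period2 uw (blockperm_remap_period2 k hd MB).
exists (Lmat R d 4 l); split; first by exists l.
apply: rt_trans (mat_equiv_eqr (mat_equiv_remap _ t sg) _)
  (mix_adjacent_tperm_equiv_Lmat l (t k) v (ltnW hd)) => a /=.
by rewrite !MB /= B'E ffunE -[tperm u w _](permKV (sg k)) vE remap_upd.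
Qed.
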